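(* Let $m \ge 1$ and let $D_1, \ldots, D_m, D_{m+1} > 0$ be feature dispersions (defined in the context) of a data set with $m+1$ features, where feature $m+1$ is an added (noisy) feature. For $v \in \{1, \ldots, m+1\}$ let $\alpha_v = \dfrac{1}{\sum_{j=1}^{m+1} \frac{D_v}{D_j}}$ be the FIR factors computed over all $m+1$ features. Then, with $D_1,\ldots,D_m$ fixed, \[ \lim_{D_{m+1} \to \infty} \sum_{v=1}^{m+1} \alpha_v^2 D_v = \frac{1}{\sum_{j=1}^m \frac{1}{D_j}}, \] which is the value of $WCSS_w = \sum_{v=1}^m \alpha_v^2 D_v$ obtained on the original $m$ features (with the FIR factors computed over those $m$ features). That is, $WCSS_w$ is asymptotically unaffected by adding an arbitrarily noisy feature.
   Context: Let $X = \{x_1, \ldots, x_n\}$ be a data set whose points are described by features, $x_{iv}$ denoting the value of feature $v$ for $x_i$. Let $C = \{C_1, \ldots, C_k\}$ be a partition of $X$ into clusters with centroids $z_l$ (component-wise means). The dispersion of feature $v$ is $D_v = \sum_{l=1}^k \sum_{x_i \in C_l} (x_{iv} - z_{lv})^2$, assumed positive for every feature. For a set of features $\{1,\ldots,p\}$, the FIR factors are $\alpha_v = 1/\sum_{j=1}^p (D_v/D_j)$ and the weighted objective is $WCSS_w = \sum_{v=1}^p \alpha_v^2 D_v$. *)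

From HB Require Import structures.
From mathcomp Require Import all_boot all_order all_algebra.
From mathcomp Require Import all_classical all_reals all_analysis.
Set Implicit Arguments. Unset Strict Implicit. Unset Printing Implicit Defensive.
Import Order.TTheory GRing.Theory Num.Theory.
Import numFieldNormedType.Exports.
Local Open Scope ring_scope.

Definition fir_alpha (R : realType) (p : nat) (D : 'I_p -> R) (v : 'I_p) : R :=
  1 / \sum_(j < p) (D v / D j).

Definition WCSSw (R : realType) (p : nat) (D : 'I_p -> R) : R :=
  \sum_(v < p) (fir_alpha D v) ^+ 2 * D v.

Definition add_feature (R : realType) (m : nat) (D : 'I_m -> R) (x : R)
  : 'I_m.+1 -> R :=
  fun i => if unlift ord_max i is Some j then D j else x.

From HB Require Import structures.
From mathcomp Require Import all_boot all_order all_algebra.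
From mathcomp Require Import all_classical all_reals all_analysis.
From mathcomp Require Import ring.
Set Implicit Arguments. Unset Strict Implicit.
Import Order.TTheory GRing.Theory Num.Theory.
Import numFieldNormedType.Exports.
Local Open Scope classical_set_scope.
Local Open Scope ring_scope.

(* Since [alpha_v = 1 / (D_v * S)] with [S = \sum_j 1 / D_j], every term
   [alpha_v^2 D_v] equals [(1 / D_v) / S^2], so [WCSS_w = 1 / S]: the
   harmonic-type mean of the dispersions.  Adding a feature of dispersion [x]
   turns [S] into [S + 1 / x], and [1 / (S + 1 / x) --> 1 / S] as
   [x --> +oo]. *)

Section FIR.
Variables (R : realType) (p : nat) (D : 'I_p -> R).
Hypothesis D_gt0 : forall j, 0 < D j.

Lemma sum_inv_gt0 : (0 < p)%N -> 0 < \sum_(j < p) (1 / D j).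
Proof.
move=> p_gt0; rewrite (bigD1 (Ordinal p_gt0)) //= ltr_pwDl ?divr_gt0 //.
by apply: sumr_ge0 => i _; rewrite divr_ge0 // ltW.
Qed.

Lemma fir_alphaE v : fir_alpha D v = 1 / (D v * \sum_(j < p) (1 / D j)).
Proof.
by rewrite /fir_alpha mulr_sumr; congr (1 / _); apply: eq_bigr => j _; rewrite mul1r.
Qed.

Lemma WCSSwE : (0 < p)%N -> WCSSw D = 1 / \sum_(j < p) (1 / D j).
Proof.
move=> p_gt0; set S := \sum_(j < p) _.
have S_neq0 : S != 0 by rewrite gt_eqF ?sum_inv_gt0.
rewrite /WCSSw (eq_bigr (fun v => (1 / D v) / S ^+ 2)) => [|v _].
  by rewrite -mulr_suml -/S; field.
have Dv_neq0 : D v != 0 by rewrite gt_eqF.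
by rewrite fir_alphaE -/S; field; rewrite Dv_neq0 S_neq0.
Qed.

End FIR.

Section AddFeature.
Variables (R : realType) (m : nat) (D : 'I_m -> R) (x : R).

Lemma add_feature_lift (i : 'I_m) : add_feature D x (lift ord_max i) = D i.
Proof. by rewrite /add_feature liftK. Qed.

Lemma add_feature_max : add_feature D x ord_max = x.
Proof. by rewrite /add_feature unlift_none. Qed.

Lemma add_feature_gt0 :
  (forall j, 0 < D j) -> 0 < x -> forall j, 0 < add_feature D x j.
Proof. by move=> D_gt0 x_gt0 j; rewrite /add_feature; case: unliftP. Qed.

Lemma big_add_feature (F : R -> R) :
  \sum_(j < m.+1) F (add_feature D x j) = \sum_(j < m) F (D j) + F x.
Proof.
rewrite big_ord_recr /= add_feature_max; congr (_ + _).
apply: eq_bigr => i _.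
have -> : widen_ord (leqnSn m) i = lift ord_max i by apply: ord_inj; rewrite lift_max.
by rewrite add_feature_lift.
Qed.

Lemma WCSSw_add_feature : (forall j, 0 < D j) -> 0 < x ->
  WCSSw (add_feature D x) = 1 / (\sum_(j < m) (1 / D j) + x^-1).
Proof.
move=> D_gt0 x_gt0.
rewrite WCSSwE //; last exact: add_feature_gt0.
by rewrite (big_add_feature (fun y => 1 / y)) [1 / x]div1r.
Qed.

End AddFeature.

Lemma cvg_inv_addinv_pinfty (R : realType) (S : R) : 0 < S ->
  1 / (S + x^-1) @[x --> +oo] --> 1 / S.
Proof.
move=> S_gt0; rewrite -[in 1 / S](addr0 S).
apply: cvgM; first exact: cvg_cst.
apply: cvgV; first by rewrite addr0 gt_eqF.
apply: cvgD; first exact: cvg_cst.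
by apply/(@gtr0_cvgV0 _ _ _ _ id); [exact: nbhs_pinfty_gt | exact: cvg_id].
Qed.

Theorem mainTheorem3 (R : realType) (m : nat) (D : 'I_m -> R) :
  (0 < m)%N -> (forall j, 0 < D j) ->
  (WCSSw (add_feature D x) @[x --> +oo] --> 1 / \sum_(j < m) (1 / D j))
  /\ WCSSw D = 1 / \sum_(j < m) (1 / D j).
Proof.
move=> m_gt0 D_gt0; split; last exact: WCSSwE.
set S := \sum_(j < m) _.
apply: (@cvg_trans _ (1 / (S + x^-1) @[x --> +oo])).
  apply: near_eq_cvg; near=> x.
  have x_gt0 : 0 < x by near: x; exact: nbhs_pinfty_gt.
  by rewrite (WCSSw_add_feature D_gt0 x_gt0).
exact/cvg_inv_addinv_pinfty/sum_inv_gt0.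
Unshelve. all: by end_near.
Qed.
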